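(* Let $n$ be a positive integer and let $\mathbb{F}$ be a field with $\operatorname{char}(\mathbb{F})\neq 2$ and $|\mathbb{F}|\geq n^2+1$. Let $\Sigma_n$ denote the set of all $n\times n$ symmetric matrices over $\mathbb{F}$. Let $\psi:\Sigma_n\to\Sigma_n$ be a map, and let $\chi$ be a map from the set of all invertible matrices in $\Sigma_n$ into $\Sigma_n$. If $\operatorname{tr}(xy)=\operatorname{tr}(\chi(x)\psi(y))$ for every invertible $x\in\Sigma_n$ and every $y\in\Sigma_n$, then $\psi$ is linear. *)

From mathcomp Require Import all_boot all_algebra.
Set Implicit Arguments. Unset Strict Implicit. Unset Printing Implicit Defensive.
Import GRing.Theory.
Local Open Scope ring_scope.

Definition symmx (F : fieldType) (n : nat) (A : 'M[F]_n) : bool := A^T == A.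

(* |F| >= m : F contains at least m pairwise distinct elements
   (also covers infinite fields) *)
Definition card_ge (F : fieldType) (m : nat) : Prop :=
  exists s : seq F, uniq s /\ (m <= size s)%N.

From mathcomp Require Import all_boot all_algebra.
Set Implicit Arguments.
Unset Strict Implicit.
Unset Printing Implicit Defensive.
Import GRing.Theory.
Local Open Scope ring_scope.

(* Pick invertible symmetric matrices x_r whose vectorisations span Sigma_n:
   the identity and the matrices E_ij + E_ji + c I, with c avoiding the
   eigenvalues of E_ij + E_ji (this is where |F| > n is used).  The Gram matrix
   [tr (x_r y)] against a spanning family y of Sigma_n has rank dim Sigma_n, and
   it factors through the matrices chi(x_r), which therefore span Sigma_n too.
   The defect psi(ax + by) - a psi(x) - b psi(y) is symmetric and trace-orthogonal
   to every chi(x_r), hence to Sigma_n, so it vanishes.  The condition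
   char F <> 2 enters through the symmetrizer A |-> A + A^T, which is then
   2 times a projection onto Sigma_n. *)

Section SymmxClosed.
Variables (F : fieldType) (n : nat).
Implicit Types A B : 'M[F]_n.

Lemma symmxD A B : symmx A -> symmx B -> symmx (A + B).
Proof. by move=> /eqP symA /eqP symB; rewrite /symmx linearD /= symA symB. Qed.

Lemma symmxB A B : symmx A -> symmx B -> symmx (A - B).
Proof. by move=> /eqP symA /eqP symB; rewrite /symmx linearB /= symA symB. Qed.

Lemma symmxZ a A : symmx A -> symmx (a *: A).
Proof. by move=> /eqP symA; rewrite /symmx linearZ /= symA. Qed.

End SymmxClosed.

Section VecRows.
Variables (F : fieldType) (m n : nat).

Lemma mxtrace_mul_tr_vec (A B : 'M[F]_(m, n)) :
  \tr (A *m B^T) = (mxvec A *m (mxvec B)^T) 0 0.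
Proof.
rewrite /mxtrace; under eq_bigr => i _ do rewrite mxE.
rewrite pair_big [RHS]mxE [RHS](reindex _ (curry_mxvec_bij m n)).
by apply: eq_bigr => -[i j] _; rewrite !mxE !mxvecE.
Qed.

Definition vec_rows k (f : 'I_k -> 'M[F]_(m, n)) : 'M[F]_(k, m * n) :=
  \matrix_r mxvec (f r).

Lemma vec_rows_mul_trE k l (f : 'I_k -> 'M[F]_(m, n)) (g : 'I_l -> 'M[F]_(m, n)) r s :
  (vec_rows f *m (vec_rows g)^T) r s = \tr (f r *m (g s)^T).
Proof. by rewrite mxtrace_mul_tr_vec !mxE; apply: eq_bigr => j _; rewrite !mxE. Qed.

Lemma vec_rows_mul_tr_vecE k (f : 'I_k -> 'M[F]_(m, n)) (B : 'M[F]_(m, n)) r :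
  (vec_rows f *m (mxvec B)^T) r 0 = \tr (f r *m B^T).
Proof. by rewrite mxtrace_mul_tr_vec !mxE; apply: eq_bigr => j _; rewrite !mxE. Qed.

Lemma vec_rows_sub k (f : 'I_k -> 'M[F]_(m, n)) r : (mxvec (f r) <= vec_rows f)%MS.
Proof. by rewrite -[mxvec _](rowK (fun r => mxvec (f r))) row_sub. Qed.

End VecRows.

Lemma mxrank_le_mul_quasi_idem (F : fieldType) m p (S : 'M[F]_m) (X : 'M[F]_(p, m)) c :
  c != 0 -> S *m S = c *: S -> (S <= X)%MS -> (\rank S <= \rank (X *m S))%N.
Proof.
move=> c_nz SS /submxP[D defS].
by rewrite -(mxrank_scale_nz S c_nz) -SS {1}defS -mulmxA mxrankM_maxr.
Qed.

Section Symmetrizer.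
Variables (F : fieldType) (n : nat).

Definition trmx_lin : 'M[F]_(n * n) := lin_mx (@trmx F n n).

Definition symmetrizer : 'M[F]_(n * n) := 1%:M + trmx_lin.

Lemma mul_vec_trmx_lin (A : 'M[F]_n) : mxvec A *m trmx_lin = mxvec A^T.
Proof. exact: mul_vec_lin. Qed.

Lemma trmx_linE (i j i' j' : 'I_n) :
  trmx_lin (mxvec_index i j) (mxvec_index i' j') = ((i' == j) && (j' == i))%:R.
Proof.
transitivity (row (mxvec_index i j) trmx_lin 0 (mxvec_index i' j')).
  by rewrite [RHS]mxE.
by rewrite rowE -mxvec_delta mul_vec_trmx_lin trmx_delta mxvecE mxE.
Qed.

Lemma tr_trmx_lin : trmx_lin^T = trmx_lin.
Proof.
apply/matrixP => k l; rewrite mxE.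
case/mxvec_indexP: k => i j; case/mxvec_indexP: l => i' j'.
by rewrite !trmx_linE andbC eq_sym [i == j']eq_sym.
Qed.

Lemma trmx_lin_invol : trmx_lin *m trmx_lin = 1%:M.
Proof.
apply/row_matrixP => k; rewrite !rowE mulmxA -[delta_mx 0 k]vec_mxK.
by rewrite !mul_vec_trmx_lin trmxK mulmx1.
Qed.

Lemma mul_vec_symmetrizer (A : 'M[F]_n) : mxvec A *m symmetrizer = mxvec (A + A^T).
Proof. by rewrite mulmxDr mulmx1 mul_vec_trmx_lin linearD. Qed.

Lemma tr_symmetrizer : symmetrizer^T = symmetrizer.
Proof. by rewrite linearD /= tr_scalar_mx tr_trmx_lin. Qed.

Lemma symmetrizer_sqr : symmetrizer *m symmetrizer = 2%:R *: symmetrizer.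
Proof.
rewrite mulmxDl !mulmxDr trmx_lin_invol !mul1mx mulmx1 scaler_nat mulr2n.
by rewrite (addrC trmx_lin).
Qed.

Lemma sub_symmetrizer_symmx (u : 'rV[F]_(n * n)) :
  (u <= symmetrizer)%MS -> symmx (vec_mx u).
Proof.
case/submxP => v ->; rewrite -[v]vec_mxK mul_vec_symmetrizer mxvecK.
by rewrite /symmx linearD /= trmxK addrC.
Qed.

Hypothesis two_nz : (2%:R : F) != 0.

Lemma symmx_vec_sub_symmetrizer (A : 'M[F]_n) :
  symmx A -> (mxvec A <= symmetrizer)%MS.
Proof.
move/eqP=> symA; apply/submxP; exists (2%:R^-1 *: mxvec A).
rewrite -scalemxAl mul_vec_symmetrizer symA -mulr2n -scaler_nat linearZ.
by rewrite scalerA mulVf ?scale1r.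
Qed.

Lemma symmx_ortho_symmetrizer_eq0 (A : 'M[F]_n) :
  symmx A -> symmetrizer *m (mxvec A)^T = 0 -> A = 0.
Proof.
move/eqP=> symA /(congr1 trmx); rewrite trmx_mul trmxK tr_symmetrizer linear0.
rewrite mul_vec_symmetrizer symA -mulr2n -scaler_nat linearZ => /eqP.
by rewrite scaler_eq0 (negbTE two_nz) mxvec_eq0 => /eqP.
Qed.

End Symmetrizer.

Lemma exists_unit_add_scalar (F : fieldType) (n : nat) (A : 'M[F]_n) (s : seq F) :
  uniq s -> (n < size s)%N -> exists c, A + c%:M \in unitmx.
Proof.
move=> s_uniq lt_n_s.
have [c _ not_eig] : exists2 c, c \in s & ~~ eigenvalue A c.
  apply/allPn; apply/negP => /allP all_eig.
  have char_poly_nz : char_poly A != 0 by rewrite -size_poly_gt0 size_char_poly.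
  have all_root : all (root (char_poly A)) s.
    by apply/allP => x /all_eig; rewrite eigenvalue_root_char.
  have := max_poly_roots char_poly_nz all_root s_uniq.
  by rewrite size_char_poly ltnS leqNgt lt_n_s.
exists (- c); move: not_eig.
by rewrite /eigenvalue /eigenspace kermx_eq0 row_free_unit negbK raddfN.
Qed.

Lemma exists_unit_symmx_span (F : fieldType) (n : nat) (s : seq F) :
  uniq s -> (n < size s)%N ->
  exists x : 'I_(n * n).+1 -> 'M[F]_n,
    [/\ forall r, symmx (x r), forall r, x r \in unitmx
      & (symmetrizer F n <= vec_rows x)%MS].
Proof.
move=> s_uniq lt_n_s.
pose y k := vec_mx (row k (symmetrizer F n)).
have sym_y k : symmx (y k) by apply: sub_symmetrizer_symmx; apply: row_sub.
have shift_y k := exists_unit_add_scalar (y k) s_uniq lt_n_s.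
pose c k := xchoose (shift_y k).
pose x r := if unlift ord0 r is Some k then y k + (c k)%:M else 1%:M.
exists x; split.
- move=> r; rewrite /x /symmx; case: unlift => [k|]; last by rewrite tr_scalar_mx.
  by rewrite linearD /= tr_scalar_mx (eqP (sym_y k)).
- move=> r; rewrite /x; case: unlift => [k|]; last exact: unitmx1.
  exact: xchooseP (shift_y k).
- apply/row_subP => k.
  have -> : row k (symmetrizer F n) = mxvec (x (lift ord0 k)) + (- c k) *: mxvec (x ord0).
    rewrite /x liftK unlift_none [mxvec _]linearD /= vec_mxK.
    by rewrite -[(c k)%:M]scalemx1 [mxvec (_ *: _)]linearZ scaleNr addrK.
  by rewrite addmx_sub ?scalemx_sub ?vec_rows_sub.
Qed.

Section TracePairing.
Variables (F : fieldType) (n : nat) (psi chi : 'M[F]_n -> 'M[F]_n).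
Hypothesis two_nz : (2%:R : F) != 0.
Hypothesis psi_sym : forall y, symmx y -> symmx (psi y).
Hypothesis chi_sym : forall x, symmx x -> x \in unitmx -> symmx (chi x).
Hypothesis tr_chi_psi : forall x y, symmx x -> x \in unitmx -> symmx y ->
  \tr (x *m y) = \tr (chi x *m psi y).

Local Notation S := (symmetrizer F n).

Lemma symmetrizer_sub_chi_rows k (x : 'I_k -> 'M[F]_n) :
  (forall r, symmx (x r)) -> (forall r, x r \in unitmx) -> (S <= vec_rows x)%MS ->
  (S <= vec_rows (fun r => chi (x r)))%MS.
Proof.
move=> sym_x unit_x span_x.
pose y j := vec_mx (row j S).
have sym_y j : symmx (y j) by apply: sub_symmetrizer_symmx; apply: row_sub.
have rows_y : vec_rows y = S by apply/row_matrixP => j; rewrite rowK vec_mxK.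
have pairing :
    vec_rows x *m S = vec_rows (fun r => chi (x r)) *m (vec_rows (fun j => psi (y j)))^T.
  rewrite -tr_symmetrizer -rows_y; apply/matrixP => r j; rewrite !vec_rows_mul_trE.
  by rewrite (eqP (sym_y j)) (eqP (psi_sym (sym_y j))) tr_chi_psi.
have chi_sub : (vec_rows (fun r => chi (x r)) <= S)%MS.
  by apply/row_subP => r; rewrite rowK symmx_vec_sub_symmetrizer ?chi_sym.
have rank_le : (\rank S <= \rank (vec_rows (fun r => chi (x r))))%N.
  apply: leq_trans (mxrank_le_mul_quasi_idem two_nz (symmetrizer_sqr F n) span_x) _.
  by rewrite pairing mxrankM_maxl.
by rewrite -(mxrank_leqif_sup chi_sub).2 eqn_leq rank_le mxrankS.
Qed.

Lemma mxtrace_chi_mul_defect_eq0 x a b y z :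
  symmx x -> x \in unitmx -> symmx y -> symmx z ->
  \tr (chi x *m (psi (a *: y + b *: z) - a *: psi y - b *: psi z)) = 0.
Proof.
move=> sym_x unit_x sym_y sym_z.
have sym_yz := symmxD (symmxZ a sym_y) (symmxZ b sym_z).
rewrite !mulmxBr -!scalemxAr !raddfB /= !mxtraceZ -!tr_chi_psi //.
by rewrite mulmxDr -!scalemxAr mxtraceD !mxtraceZ (addrC (a * _)) addrK subrr.
Qed.

End TracePairing.

Theorem lemma2p2 (F : fieldType) (n : nat) (hn : (0 < n)%N)
  (hchar : (2%:R : F) != 0) (hcard : card_ge F (n ^ 2).+1)
  (psi chi : 'M[F]_n -> 'M[F]_n)
  (hpsi : forall y, symmx y -> symmx (psi y))
  (hchi : forall x, symmx x -> x \in unitmx -> symmx (chi x))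
  (htr : forall x y, symmx x -> x \in unitmx -> symmx y ->
           \tr (x *m y) = \tr (chi x *m psi y)) :
  forall (a b : F) (x y : 'M[F]_n), symmx x -> symmx y ->
    psi (a *: x + b *: y) = a *: psi x + b *: psi y.
Proof.
move=> a b x y sym_x sym_y.
have [s [s_uniq le_n2_s]] := hcard.
have lt_n_s : (n < size s)%N by apply: leq_trans le_n2_s; rewrite ltnS; exact: leq_pmulr.
have [z [sym_z unit_z span_z]] := exists_unit_symmx_span s_uniq lt_n_s.
have /submxP[D span_chi] := symmetrizer_sub_chi_rows hchar hpsi hchi htr sym_z unit_z span_z.
set w := psi (a *: x + b *: y) - a *: psi x - b *: psi y.
have sym_xy := symmxD (symmxZ a sym_x) (symmxZ b sym_y).
have sym_w : symmx w :=
  symmxB (symmxB (hpsi _ sym_xy) (symmxZ a (hpsi _ sym_x))) (symmxZ b (hpsi _ sym_y)).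
have ortho_w : vec_rows (fun r => chi (z r)) *m (mxvec w)^T = 0.
  apply/colP => r; rewrite vec_rows_mul_tr_vecE (eqP sym_w) mxE.
  exact: mxtrace_chi_mul_defect_eq0.
have /eqP : w = 0.
  by apply: (symmx_ortho_symmetrizer_eq0 hchar sym_w); rewrite span_chi -mulmxA ortho_w mulmx0.
by rewrite subr_eq0 subr_eq [_ + a *: _]addrC => /eqP.
Qed.
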